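(* Let $\mathcal{X}$ be a finite set, $\pi$ a probability mass function on $\mathcal{X}$ with full support, and let a group $\mathcal{G}$ act on $\mathcal{X}$ with Gibbs, Metropolis–Hastings and Barker orbit kernels $G$, $M$, $B$. Let $\mathbf{G}=\{Q\in\mathcal{S}(\pi):GQG=Q\}$. For every $P\in\mathcal{S}(\pi)$ and $Q\in\mathbf{G}$, $D^\pi_{KL}(P\|Q)\ge D^\pi_{KL}(PM\|Q)$, $D^\pi_{KL}(P\|Q)\ge D^\pi_{KL}(PB\|Q)$, $D^\pi_{KL}(P\|Q)\ge D^\pi_{KL}(MP\|Q)$ and $D^\pi_{KL}(P\|Q)\ge D^\pi_{KL}(BP\|Q)$.
   Context: $\mathcal{S}(\pi)$ is the set of transition matrices $P$ with $\pi P=\pi$. $D^\pi_{KL}(P\|Q)=\sum_{x,y}\pi(x)P(x,y)\log\frac{P(x,y)}{Q(x,y)}$ with convention $0\log(0/a)=0$. With $\mathcal{O}(x)$ the orbit of $x$: $G(x,y)=\pi(y)/\pi(\mathcal{O}(x))$ for $y\in\mathcal{O}(x)$, else $0$; $M(x,y)=\frac{1}{|\mathcal{O}(x)|-1}\min\{1,\pi(y)/\pi(x)\}$ for $y\in\mathcal{O}(x)\setminus\{x\}$, $0$ off the orbit, $M(x,x)=1-\sum_{y\ne x}M(x,y)$; $B$ is the same with acceptance $\pi(y)/(\pi(x)+\pi(y))$. *)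

From HB Require Import structures.
From mathcomp Require Import all_boot all_order all_algebra.
From mathcomp Require Import boolp classical_sets reals ereal exp.
Set Implicit Arguments. Unset Strict Implicit. Unset Printing Implicit Defensive.
Import Order.TTheory GRing.Theory Num.Theory.
Local Open Scope ring_scope.

Section Kernels.
Variables (R : realType) (X : finType).

Definition kmul (P Q : X -> X -> R) : X -> X -> R :=
  fun x y => \sum_(z : X) P x z * Q z y.

Definition stochastic (P : X -> X -> R) : Prop :=
  (forall x y, 0 <= P x y) /\ (forall x, \sum_(y : X) P x y = 1).

Definition Spi (pi : X -> R) (P : X -> X -> R) : Prop :=
  stochastic P /\ (forall y, \sum_(x : X) pi x * P x y = pi y).

Definition KLpi (pi : X -> R) (P Q : X -> X -> R) : \bar R :=
  (\sum_(x : X) \sum_(y : X)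
     (if (pi x * P x y == 0)%R then 0%E
      else if (Q x y == 0)%R then +oo%E
      else ((pi x * P x y) * ln (P x y / Q x y))%:E))%E.

End Kernels.

Section Orbits.
Variables (R : realType) (X : finType) (gT : groupType).
Variable act : gT -> X -> X.

Definition is_action : Prop :=
  (forall x, act 1%g x = x) /\ (forall g h x, act (g * h)%g x = act g (act h x)).

Definition orbitS (x : X) : {set X} := [set y | `[< exists g : gT, act g x = y >]].

Variable pi : X -> R.

Definition Gker : X -> X -> R := fun x y =>
  if y \in orbitS x then pi y / (\sum_(z in orbitS x) pi z) else 0.

(* off-diagonal entries of a Metropolis-type orbit kernel with acceptance a *)
Definition offker (a : X -> X -> R) : X -> X -> R := fun x y =>
  if (y \in orbitS x) && (y != x) then (#|orbitS x|.-1)%:R^-1 * a x y else 0.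

Definition diagker (a : X -> X -> R) : X -> X -> R := fun x y =>
  if y == x then 1 - \sum_(z : X | z != x) offker a x z else offker a x y.

Definition Mker : X -> X -> R := diagker (fun x y => Num.min 1 (pi y / pi x)).
Definition Bker : X -> X -> R := diagker (fun x y => pi y / (pi x + pi y)).

End Orbits.

From HB Require Import structures.
From mathcomp Require Import all_boot all_order all_algebra.
From mathcomp Require Import boolp classical_sets reals ereal exp.
From mathcomp Require Import ring lra.
Import Order.TTheory GRing.Theory Num.Theory.
Local Open Scope ring_scope.

(* A kernel [M] that is [pi]-reversible and moves only within orbits satisfies
   [G M = G = M G]; hence every [Q] with [G Q G = Q] satisfies [Q M = Q = M Q].
   By the log-sum inequality, composing [P] and [Q] on the right with a
   stochastic kernel, or on the left with a [pi]-stationary one, cannot increase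
   [D^pi_KL(P || Q)]. The Metropolis-Hastings and Barker kernels are such
   reversible orbit kernels, because their acceptance probabilities satisfy
   detailed balance. *)

Section Divergence.
Variable R : realType.

Lemma ln_le_subr1 (v : R) : 0 < v -> ln v <= v - 1.
Proof.
move=> v0; have := @le_ln1Dx R (v - 1); rewrite addrCA subrr addr0; apply.
by rewrite ltrBrDr addrC subrr.
Qed.

Lemma log_sum_le (I : finType) (a b : I -> R) :
  (forall i, 0 <= a i) -> (forall i, 0 <= b i) -> (forall i, a i != 0 -> b i != 0) ->
  (\sum_i a i) * ln ((\sum_i a i) / (\sum_i b i)) <= \sum_i a i * ln (a i / b i).
Proof.
move=> a0 b0 ab; set A := \sum_i a i; set B := \sum_i b i.
have [i ai0|a_eq0] := pickP (fun i => a i != 0); last first.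
  have aE j : a j = 0 by apply/eqP/negbFE/a_eq0.
  by rewrite /A !big1 ?mul0r // => j _; rewrite aE ?mul0r.
have ai_gt0 : 0 < a i by rewrite lt_def ai0 a0.
have bi_gt0 : 0 < b i by rewrite lt_def ab // b0.
have A_gt0 : 0 < A by rewrite /A (bigD1 i) //= ltr_wpDr // sumr_ge0.
have B_gt0 : 0 < B by rewrite /B (bigD1 i) //= ltr_wpDr // sumr_ge0.
(* Gibbs: each term is bounded below by its tangent at the ratio [A / B]. *)
have tangent j : a j * ln (A / B) + a j - b j * (A / B) <= a j * ln (a j / b j).
  have [->|aj0] := eqVneq (a j) 0.
    by rewrite !mul0r add0r sub0r oppr_le0 mulr_ge0 // divr_ge0 ?ltW.
  have aj_gt0 : 0 < a j by rewrite lt_def aj0 a0.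
  have bj_gt0 : 0 < b j by rewrite lt_def ab // b0.
  have r_gt0 : 0 < (A / B) / (a j / b j) by rewrite !divr_gt0.
  have := ler_wpM2l (ltW aj_gt0) (ln_le_subr1 _ r_gt0).
  have -> : a j * ((A / B) / (a j / b j) - 1) = b j * (A / B) - a j.
    by field; rewrite !gt_eqF.
  rewrite ln_div ?posrE ?divr_gt0 // mulrBr; lra.
apply: le_trans (ler_sum _ (fun j _ => tangent j)).
rewrite !big_split /= sumrN -!mulr_suml -/A -/B.
have -> : B * (A / B) = A by field; rewrite gt_eqF.
lra.
Qed.

Section Mixture.
Variables (I : finType) (c p q : I -> R).
Hypotheses (c0 : forall i, 0 <= c i) (p0 : forall i, 0 <= p i) (q0 : forall i, 0 <= q i).
Hypothesis pq : forall i, p i != 0 -> q i != 0.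

Lemma mixture_neq0 : \sum_i c i * p i != 0 -> \sum_i c i * q i != 0.
Proof.
have [i /andP[ci0 pi0] _|cp_eq0] := pickP (fun i => (c i != 0) && (p i != 0)).
  rewrite gt_eqF // (bigD1 i) //= ltr_wpDr ?sumr_ge0 // => [j _|].
    exact: mulr_ge0.
  by rewrite mulr_gt0 // lt_def ?ci0 ?pq ?c0 ?q0.
rewrite big1 ?eqxx // => i _.
by have /negbT := cp_eq0 i; rewrite negb_and !negbK => /orP[] /eqP ->; rewrite ?mul0r ?mulr0.
Qed.

Lemma log_sum_mixture_le :
  (\sum_i c i * p i) * ln ((\sum_i c i * p i) / (\sum_i c i * q i))
  <= \sum_i c i * (p i * ln (p i / q i)).
Proof.
apply: (@le_trans _ _ (\sum_i c i * p i * ln (c i * p i / (c i * q i)))).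
  apply: log_sum_le => i; rewrite ?mulr_ge0 //.
  by rewrite !mulf_eq0 !negb_or => /andP[-> /pq].
apply: ler_sum => i _; have [->|ci0] := eqVneq (c i) 0; first by rewrite !mul0r.
have [->|pi0] := eqVneq (p i) 0; first by rewrite mul0r mulr0 mul0r.
have -> : c i * p i / (c i * q i) = p i / q i by field; rewrite ci0 pq.
by rewrite mulrA.
Qed.

End Mixture.

Section KL.
Variable X : finType.
Implicit Types P Q K : X -> X -> R.

Lemma kmulA P Q K : kmul (kmul P Q) K = kmul P (kmul Q K).
Proof.
apply/funext => x; apply/funext => y; rewrite /kmul.
under eq_bigr do rewrite mulr_suml.
rewrite exchange_big /=; apply: eq_bigr => z _; rewrite mulr_sumr.
by apply: eq_bigr => w _; rewrite mulrA.
Qed.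

Definition dominated P Q : Prop := forall x y, P x y != 0 -> Q x y != 0.

Variable pi : X -> R.
Hypothesis pi_gt0 : forall x, 0 < pi x.

Lemma KLpi_fin P Q : dominated P Q ->
  KLpi pi P Q = (\sum_x \sum_y pi x * (P x y * ln (P x y / Q x y)))%:E.
Proof.
move=> PQ; rewrite /KLpi -sumEFin; apply: eq_bigr => x _; rewrite -sumEFin.
apply: eq_bigr => y _; rewrite mulf_eq0 (gt_eqF (pi_gt0 x)) /=.
by have [->|/PQ/negbTE->] := eqVneq (P x y) 0; rewrite ?mul0r ?mulr0 ?mulrA.
Qed.

Lemma KLpi_infty P Q : ~ dominated P Q -> KLpi pi P Q = +oo%E.
Proof.
move=> /existsNP[x /existsNP[y /not_implyP[Pxy /negP/negPn Qxy]]].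
have term_neqNy x' y' : (if pi x' * P x' y' == 0 then 0%E
    else if Q x' y' == 0 then +oo%E
    else ((pi x' * P x' y') * ln (P x' y' / Q x' y'))%:E) != -oo%E.
  by case: ifP => //; case: ifP.
apply/eqP; rewrite /KLpi esum_eqy; last first.
  move=> x' _; rewrite esum_eqNy; apply/existsP => -[y' /andP[_ /eqP e]].
  by move: (term_neqNy x' y'); rewrite e.
apply/existsP; exists x; rewrite /= esum_eqy //; apply/existsP; exists y.
by rewrite /= mulf_eq0 (gt_eqF (pi_gt0 x)) /= (negbTE Pxy) Qxy.
Qed.

Lemma KLpi_kmulr_le P Q K :
  (forall x y, 0 <= P x y) -> (forall x y, 0 <= Q x y) -> (forall x y, 0 <= K x y) ->
  (forall x, \sum_y K x y = 1) -> kmul Q K = Q ->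
  (KLpi pi (kmul P K) Q <= KLpi pi P Q)%E.
Proof.
move=> P0 Q0 K0 K1 QK.
have [PQ|/KLpi_infty->] := pselect (dominated P Q); last by rewrite leey.
have mixE (S : X -> X -> R) x z : kmul S K x z = \sum_y K y z * S x y.
  by apply: eq_bigr => y _; rewrite mulrC.
have QE x z : Q x z = \sum_y K y z * Q x y by rewrite -mixE QK.
have PKQ : dominated (kmul P K) Q.
  move=> x z; rewrite mixE QE.
  apply: (mixture_neq0 _ (fun y => K y z) (fun y => P x y) (fun y => Q x y)) => //.
  by move=> y; apply: PQ.
rewrite !KLpi_fin // lee_fin; apply: ler_sum => x _.
rewrite -!mulr_sumr ler_pM2l //.
apply: (@le_trans _ _ (\sum_z \sum_y K y z * (P x y * ln (P x y / Q x y)))).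
  apply: ler_sum => z _; rewrite QE mixE.
  by apply: log_sum_mixture_le => // y; apply: PQ.
rewrite exchange_big /=; apply: ler_sum => y _.
by rewrite -mulr_suml K1 mul1r.
Qed.

Lemma KLpi_kmull_le P Q K :
  (forall x y, 0 <= P x y) -> (forall x y, 0 <= Q x y) -> (forall x y, 0 <= K x y) ->
  (forall y, \sum_x pi x * K x y = pi y) -> kmul K Q = Q ->
  (KLpi pi (kmul K P) Q <= KLpi pi P Q)%E.
Proof.
move=> P0 Q0 K0 piK KQ.
have [PQ|/KLpi_infty->] := pselect (dominated P Q); last by rewrite leey.
have QE x z : Q x z = \sum_w K x w * Q w z by rewrite -{1}KQ.
have KPQ : dominated (kmul K P) Q.
  move=> x z; rewrite QE.
  apply: (mixture_neq0 _ (fun w => K x w) (fun w => P w z) (fun w => Q w z)) => //.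
  by move=> w; apply: PQ.
rewrite !KLpi_fin // lee_fin.
apply: (@le_trans _ _
  (\sum_x \sum_z pi x * \sum_w K x w * (P w z * ln (P w z / Q w z)))).
  apply: ler_sum => x _; apply: ler_sum => z _; rewrite ler_pM2l //.
  by rewrite QE; apply: log_sum_mixture_le => // w; apply: PQ.
rewrite exchange_big [leRHS]exchange_big /=; apply: ler_sum => z _.
under eq_bigr do rewrite mulr_sumr.
rewrite exchange_big /=; apply: ler_sum => w _.
by rewrite -piK mulr_suml; apply: ler_sum => x _; rewrite mulrA.
Qed.
End KL.
End Divergence.

Section Orbits.
Context {R : realType} {X : finType} {gT : groupType} {act : gT -> X -> X}.
Context { pi : X -> R }. (* [{pi] is a token of generic_quotient *)
Hypotheses (act_is_action : is_action act) (pi_gt0 : forall x, 0 < pi x).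

Local Notation O := (orbitS act).
Local Notation G := (Gker act pi).

Lemma orbitSP x y : reflect (exists g, act g x = y) (y \in O x).
Proof. by rewrite inE; apply: (iffP (asboolP _)). Qed.

Lemma orbitS_refl x : x \in O x.
Proof. by apply/orbitSP; exists 1%g; case: act_is_action. Qed.

Lemma orbitS_sym {x y} : y \in O x -> x \in O y.
Proof.
case: act_is_action => act1 actM.
by move/orbitSP => [g <-]; apply/orbitSP; exists g^-1%g; rewrite -actM mulVg act1.
Qed.

Lemma orbitS_trans {x y z} : y \in O x -> z \in O y -> z \in O x.
Proof.
case: act_is_action => _ actM.
by move/orbitSP => [g <-] /orbitSP[h <-]; apply/orbitSP; exists (h * g)%g; rewrite actM.
Qed.

Lemma orbitS_eq {x y} : y \in O x -> O y = O x.
Proof.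
move=> yx; apply/setP => z; apply/idP/idP; first exact: orbitS_trans.
exact/orbitS_trans/orbitS_sym.
Qed.

Section ReversibleOrbitKernel.
Variable M : X -> X -> R.
Hypotheses (M_ge0 : forall x y, 0 <= M x y) (M_sum1 : forall x, \sum_y M x y = 1).
Hypothesis M_rev : forall x y, pi x * M x y = pi y * M y x.
Hypothesis M_orbit : forall x y, M x y != 0 -> y \in O x.

Lemma rev_orbit_eq0 x y : y \notin O x -> M x y = 0.
Proof. by move=> yx; apply/eqP; apply: contraNT yx; apply: M_orbit. Qed.

Lemma kmul_Gker_rev : kmul G M = G.
Proof.
apply/funext => x; apply/funext => z; rewrite /kmul /Gker.
have [zx|zx] := boolP (z \in O x).
  rewrite -[RHS]mulr1 -(M_sum1 z) mulr_sumr; apply: eq_bigr => y _.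
  case: ifP => yx; first by rewrite mulrAC M_rev mulrAC.
  by rewrite mul0r rev_orbit_eq0 ?mulr0 // (orbitS_eq zx) yx.
apply: big1 => y _; case: ifP => yx; last by rewrite mul0r.
by rewrite rev_orbit_eq0 ?mulr0 // (orbitS_eq yx).
Qed.

Lemma kmul_rev_Gker : kmul M G = G.
Proof.
apply/funext => x; apply/funext => z; rewrite /kmul.
rewrite -[RHS]mul1r -(M_sum1 x) mulr_suml; apply: eq_bigr => y _.
have [->|/M_orbit yx] := eqVneq (M x y) 0; first by rewrite !mul0r.
by rewrite /Gker (orbitS_eq yx).
Qed.

Lemma rev_stationary y : \sum_x pi x * M x y = pi y.
Proof. by under eq_bigr do rewrite M_rev; rewrite -mulr_sumr M_sum1 mulr1. Qed.

Lemma Gker_fixed_rev_invariant Q : kmul (kmul G Q) G = Q -> kmul Q M = Q /\ kmul M Q = Q.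
Proof.
move=> GQG; split; first by rewrite -GQG kmulA kmul_Gker_rev.
by rewrite -GQG -!kmulA kmul_rev_Gker.
Qed.

Lemma KLpi_rev_orbit_le P Q :
  (forall x y, 0 <= P x y) -> (forall x y, 0 <= Q x y) -> kmul (kmul G Q) G = Q ->
  (KLpi pi (kmul P M) Q <= KLpi pi P Q)%E /\ (KLpi pi (kmul M P) Q <= KLpi pi P Q)%E.
Proof.
move=> P0 Q0 /Gker_fixed_rev_invariant[QM MQ]; split; first exact: KLpi_kmulr_le.
by apply: KLpi_kmull_le => //; exact: rev_stationary.
Qed.

End ReversibleOrbitKernel.

Definition acceptance (a : X -> X -> R) : Prop :=
  [/\ forall x y, 0 <= a x y, forall x y, a x y <= 1
     & forall x y, pi x * a x y = pi y * a y x].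

Section OrbitProposal.
Variable a : X -> X -> R.

Lemma offker_orbit x y : offker act a x y != 0 -> (y \in O x) && (y != x).
Proof. by rewrite /offker; case: ifP; rewrite ?eqxx. Qed.

Lemma diagker_sum1 x : \sum_y diagker act a x y = 1.
Proof.
rewrite (bigD1 x) //= {1}/diagker eqxx (eq_bigr (offker act a x)) ?subrK //.
by move=> y /negbTE yx; rewrite /diagker yx.
Qed.

Lemma diagker_orbit x y : diagker act a x y != 0 -> y \in O x.
Proof.
have [-> _|yx] := eqVneq y x; first exact: orbitS_refl.
by rewrite /diagker (negbTE yx) => /offker_orbit/andP[].
Qed.

Hypotheses (a_ge0 : forall x y, 0 <= a x y) (a_le1 : forall x y, a x y <= 1).

Lemma offker_ge0 x y : 0 <= offker act a x y.
Proof. by rewrite /offker; case: ifP => // _; rewrite mulr_ge0 ?invr_ge0. Qed.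

(* Row [x] has [#|O x| - 1] nonzero off-diagonal entries, each at most
   [1 / (#|O x| - 1)]. *)
Lemma offker_sum_le1 x : \sum_(z | z != x) offker act a x z <= 1.
Proof.
set c := (#|O x|.-1)%:R^-1 : R.
apply: (@le_trans _ _ (\sum_(z | z != x) if z \in O x then c else 0)).
  apply: ler_sum => z zx; rewrite /offker zx andbT; case: ifP => // _.
  by rewrite ler_piMr ?invr_ge0.
rewrite -big_mkcondr /= (eq_bigl (mem (O x :\ x))) => [|z]; last first.
  by rewrite !inE andbC.
rewrite sumr_const /c (cardsD1 x (O x)) orbitS_refl add1n /=.
by case: #|_| => [|n]; rewrite ?mulr0n // -[leLHS]mulr_natr mulVf ?pnatr_eq0.
Qed.

Lemma diagker_ge0 x y : 0 <= diagker act a x y.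
Proof.
by rewrite /diagker; case: ifP => _; rewrite ?subr_ge0 ?offker_sum_le1 ?offker_ge0.
Qed.

Hypothesis a_rev : forall x y, pi x * a x y = pi y * a y x.

Lemma diagker_rev x y : pi x * diagker act a x y = pi y * diagker act a y x.
Proof.
have [->//|yx] := eqVneq y x; have xy : x != y by rewrite eq_sym.
rewrite /diagker /offker (negbTE yx) (negbTE xy) /= !andbT.
have [yO|yO] := boolP (y \in O x).
  by rewrite (orbitS_sym yO) (orbitS_eq yO) mulrCA a_rev mulrCA.
by rewrite ifN ?mulr0 //; apply: contra yO; exact: orbitS_sym.
Qed.

End OrbitProposal.

Lemma KLpi_diagker_le {a P Q} : acceptance a ->
  (forall x y, 0 <= P x y) -> (forall x y, 0 <= Q x y) -> kmul (kmul G Q) G = Q ->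
  (KLpi pi (kmul P (diagker act a)) Q <= KLpi pi P Q)%E /\
  (KLpi pi (kmul (diagker act a) P) Q <= KLpi pi P Q)%E.
Proof.
move=> [a_ge0 a_le1 a_rev]; apply: KLpi_rev_orbit_le => //.
- exact: diagker_ge0.
- exact: diagker_sum1.
- exact: diagker_rev.
- exact: diagker_orbit.
Qed.

Lemma metropolis_acceptance : acceptance (fun x y => Num.min 1 (pi y / pi x)).
Proof.
split=> [x y|x y|x y]; first by rewrite le_min ler01 divr_ge0 ?ltW.
  by rewrite ge_min lexx.
have mulKr (u v : R) : 0 < u -> u * (v / u) = v.
  by move=> u_gt0; rewrite mulrC divfK ?gt_eqF.
by rewrite !minr_pMr ?ltW // !mulr1 !mulKr // minC.
Qed.

Lemma barker_acceptance : acceptance (fun x y => pi y / (pi x + pi y)).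
Proof.
split=> [x y|x y|x y]; first by rewrite divr_ge0 ?addr_ge0 ?ltW.
  by rewrite ler_pdivrMr ?addr_gt0 // mul1r lerDr ltW.
by rewrite [pi y + _]addrC !mulrA [pi x * _]mulrC.
Qed.

End Orbits.

Theorem proposition5p4 (R : realType) (X : finType) (gT : groupType)
  (act : gT -> X -> X) (pi : X -> R) :
  is_action act ->
  (forall x, 0 < pi x) -> \sum_(x : X) pi x = 1 ->
  forall P Q : X -> X -> R,
  Spi pi P -> Spi pi Q ->
  kmul (kmul (Gker act pi) Q) (Gker act pi) = Q ->
  [/\ (KLpi pi (kmul P (Mker act pi)) Q <= KLpi pi P Q)%E,
      (KLpi pi (kmul P (Bker act pi)) Q <= KLpi pi P Q)%E,
      (KLpi pi (kmul (Mker act pi) P) Q <= KLpi pi P Q)%E &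
      (KLpi pi (kmul (Bker act pi) P) Q <= KLpi pi P Q)%E].
Proof.
move=> act_is_action pi_gt0 _ P Q [[P_ge0 _] _] [[Q_ge0 _] _] GQG.
have [PM MP] := KLpi_diagker_le act_is_action pi_gt0
  (metropolis_acceptance pi_gt0) P_ge0 Q_ge0 GQG.
have [PB BP] := KLpi_diagker_le act_is_action pi_gt0
  (barker_acceptance pi_gt0) P_ge0 Q_ge0 GQG.
by split.
Qed.
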